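(* Fix $n\ge2$. Let $p:S^n\to\mathbb{RP}^n$ be the standard double cover and $q:\mathbb R\to S^1$, $q(\theta)=e^{i\theta}$. Then the product covering $p\times q:S^n\times\mathbb R\to\mathbb{RP}^n\times S^1$ is not equivalent (as a covering over $\mathbb{RP}^n\times S^1$) to any Weierstrass entire covering.
   Context: For a topological space $X$, a Weierstrass entire family is a continuous map $F:X\times\mathbb C\to\mathbb C$ such that for each $x\in X$, $z\mapsto F(x,z)$ is entire, and such that the zero locus $Z(F)=\{(x,z):F(x,z)=0\}$ with the first projection $p_1:Z(F)\to X$ is a countably infinite-sheeted covering. This covering is the Weierstrass entire covering associated to $F$. *)

From HB Require Import structures.
From mathcomp Require Import all_boot all_order all_algebra generic_quotient.
From mathcomp Require Import complex.
From mathcomp Require Import all_classical all_reals all_analysis.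
Set Implicit Arguments. Unset Strict Implicit. Unset Printing Implicit Defensive.
Import Order.TTheory GRing.Theory Num.Theory.
Import numFieldNormedType.Exports.
Local Open Scope ring_scope.
Local Open Scope classical_set_scope.

Definition covering_map (E B : topologicalType) (p : E -> B) : Prop :=
  continuous p /\
  forall b : B, exists U : set B, [/\ open U, U b &
    exists (I : Type) (V : I -> set E),
      [/\ p @^-1` U = \bigcup_(i in setT) V i,
          (forall i, open (V i)),
          (forall i j, i <> j -> V i `&` V j = set0) &
          (forall i, exists g : B -> E,
             [/\ (forall x, V i x -> g (p x) = x),
                 (forall y, U y -> V i (g y) /\ p (g y) = y) &
                 {within U, continuous g}])]].

Definition countably_infinite_sheeted_covering (E B : topologicalType)
    (p : E -> B) : Prop :=
  covering_map p /\ forall b : B, ([set e | p e = b] #= [set: nat])%card.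

Definition equivalent_coverings (E1 E2 B : topologicalType)
    (p1 : E1 -> B) (p2 : E2 -> B) : Prop :=
  exists (h : E1 -> E2) (g : E2 -> E1),
    [/\ continuous h, continuous g, cancel h g, cancel g h &
        forall e, p2 (h e) = p1 e].

Definition Cplx (R : realType) : Type := (R[i])^o.

Section Weierstrass.
Variables (R : realType) (X : topologicalType).
Local Notation C := (Cplx R).

Definition zero_locus (F : X * C -> C) : set (X * C)%type :=
  [set xz | F xz = 0].

Definition ZF (F : X * C -> C) : topologicalType := set_type (zero_locus F).
Definition proj1Z (F : X * C -> C) : ZF F -> X :=
  fun xz => (set_val xz).1.

Definition weierstrass_entire_family (F : X * C -> C) : Prop :=
  [/\ continuous F,
      (forall (x : X) (z : C), derivable (fun w : C => F (x, w)) z 1) &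
      countably_infinite_sheeted_covering (@proj1Z F)].
End Weierstrass.

Section Spaces.
Variables (R : realType) (n : nat).

Definition sphere : set 'rV[R]_n.+1 := [set x | \sum_i x ord0 i ^+ 2 = 1].
Definition Sph : topologicalType := set_type sphere.

Definition antipodal (x y : Sph) : bool :=
  (x == y) || (set_val x == - set_val y).

Lemma antipodal_refl : reflexive antipodal.
Proof. by move=> x; rewrite /antipodal eqxx. Qed.

Lemma antipodal_sym : symmetric antipodal.
Proof.
move=> x y; rewrite /antipodal eq_sym; congr (_ || _).
apply/eqP/eqP => ->; by rewrite opprK.
Qed.

Lemma antipodal_trans : transitive antipodal.
Proof.
move=> y x z; rewrite /antipodal => /orP[/eqP->//|/eqP xy] /orP[/eqP<-|/eqP yz].
  by rewrite xy eqxx orbT.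
apply/orP; left; apply/eqP.
move: x y z xy yz => [x hx] [y hy] [z hz]; rewrite !set_valE /= => xy yz.
move: hx; rewrite xy yz opprK => hx.
by congr exist; apply: Prop_irrelevance.
Qed.

Canonical antipodal_rel := EquivRel antipodal antipodal_refl antipodal_sym
  antipodal_trans.

Definition RP : topologicalType :=
  quotient_topology {eq_quot antipodal_rel}%qT.

Definition proj_RP : Sph -> RP := \pi_RP%qT.
End Spaces.

Section Circle.
Variable R : realType.
Local Notation C := (Cplx R).
Definition circle : set C := [set z | `|z| = 1].
Definition S1 : topologicalType := set_type circle.

Lemma expi_circle (t : R) : circle ((cos t +i* sin t)%C : C).
Proof.
rewrite /circle /= -[`|(_ +i* _)%C|]/(Num.sqrt (_ + _))%:C%C.
by rewrite cos2Dsin2 sqrtr1.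
Qed.

Definition expi_S1 (t : R) : S1 := @exist C (fun z : C => z \in circle) _ (mem_set (expi_circle t)).
End Circle.

Definition prod_cover (R : realType) (n : nat) :
    (Sph R n * R)%type -> (RP R n * S1 R)%type :=
  fun xt => (proj_RP xt.1, expi_S1 xt.2).

From HB Require Import structures.
From mathcomp Require Import all_boot all_order all_algebra generic_quotient.
From mathcomp Require Import complex.
From mathcomp Require Import all_classical all_reals all_analysis.
From mathcomp Require Import zify ring lra.
Import numFieldNormedType.Exports.
Set Implicit Arguments. Unset Strict Implicit. Unset Printing Implicit Defensive.
Import Order.TTheory GRing.Theory Num.Theory.
Local Open Scope ring_scope.
Local Open Scope classical_set_scope.

(* An equivalence with a Weierstrass covering embeds S^n x R over the base into
   (RP^n x S^1) x C.  Reading off the C-coordinate of the image of (x, 0) gives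
   f : S^n -> C with f x <> f (-x), because x and -x lie over the same point of
   RP^n.  So g x := f x - f (-x) is an odd map S^n -> C \ {0}, which the
   Borsuk-Ulam theorem forbids for n >= 2.

   It suffices to refute g on a 2-sphere.  Write P x t for the point of polar
   angle x in [-pi/2, pi/2] and azimuth t in [0, pi].  Oddness makes
   g (P (-pi/2) t) = - g (P (pi/2) t), so the angle A t swept by the path
   x |-> g (P x t) is an odd multiple of pi; but the path at t = pi is the
   reversal of the path at t = 0, so A pi = - A 0 and A vanishes somewhere.
   The swept angle is a finite sum of small atan steps whose size is controlled
   by uniform continuity on the compact rectangle. *)

Lemma continuous_sum_nat (T : topologicalType) (K : numFieldType)
    (V : normedModType K) (f : nat -> T -> V) (N : nat) (t : T) :
  (forall j, (j < N)%N -> {for t, continuous (f j)}) ->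
  {for t, continuous (fun t => \sum_(0 <= j < N) f j t)}.
Proof.
elim: N => [|N IH] cf.
  rewrite (_ : (fun _ => _) = cst 0); first exact: cvg_cst.
  by apply/funext => u; rewrite big_nil.
rewrite (_ : (fun _ => _) = (fun u => \sum_(0 <= j < N) f j u + f N u)).
  by apply: cvgD; [apply: IH => j jN; apply: cf; exact: ltnW | exact: cf].
by apply/funext => u; rewrite big_nat_recr.
Qed.

Lemma continuous_slice (T U V : topologicalType) (k : T -> U -> V) (x : T) :
  continuous (fun p : T * U => k p.1 p.2) -> continuous (k x).
Proof.
move=> ck t; apply: (@continuous_comp _ _ _ (fun t => (x, t)) _ t _ (ck (x, t))).
exact: (cvg_pair (cvg_cst x) cvg_id).
Qed.

Section UniformContinuity.
Variable R : realType.

Lemma uniform_continuity_rectangle (k : R -> R -> R) (a b c d w e : R) :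
  0 < w -> 0 < e -> continuous (fun p : R * R => k p.1 p.2) ->
  \forall m \near \oo, forall x t x', (x \in `[a, b])%R -> (t \in `[c, d])%R ->
    `|x - x'| <= w / m.+1%:R -> `|k x t - k x' t| < e.
Proof.
move=> w_gt0 e_gt0 ck.
have /compact_near_coveringP cpt : compact (`[a, b] `*` `[c, d] : set (R * R)).
  by apply: compact_setX; exact: segment_compact.
have cover : \forall m \near \oo, `[a, b] `*` `[c, d] `<=`
    (fun y : R * R => forall x', `|y.1 - x'| <= w / m.+1%:R ->
      `|k y.1 y.2 - k x' y.2| < e).
  apply: cpt => -[x0 t0] _.
  have /cvgr_dist_lt /(_ (e / 2)) := ck (x0, t0).
  move=> /(_ ltac:(lra)) /nbhs_ballP [r /= r_gt0 near_k].
  have [N wN] : exists N : nat, w / N.+1%:R < r / 2.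
    exists (Num.truncn (w / (r / 2))).
    have := truncnS_gt (w / (r / 2)); rewrite ltr_pdivrMr; last lra.
    by rewrite ltr_pdivrMr ?ltr0Sn // mulrC.
  exists (ball (x0, t0) (r / 2), [set m | (N <= m)%N]).
    by split; [apply: nbhsx_ballx; lra | exact: nbhs_infty_ge].
  move=> [[x t] m] /= [[x0x t0t] Nm] x' xx'.
  have wmN : w / m.+1%:R <= w / N.+1%:R.
    by rewrite ler_pM2l // lef_pV2 ?posrE ?ltr0Sn // ler_nat ltnS.
  rewrite /ball /= in x0x t0t.
  have xx'r : `|x - x'| < r / 2 := le_lt_trans xx' (le_lt_trans wmN wN).
  have /(near_k (x, t)) /= kx : `|x0 - x| < r /\ `|t0 - t| < r by split; lra.
  have /(near_k (x', t)) /= kx' : `|x0 - x'| < r /\ `|t0 - t| < r.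
    split; last lra.
    by apply: le_lt_trans (ler_distD x x0 x') _; rewrite [r in _ < r]splitr ltrD.
  apply: le_lt_trans (ler_distD (k x0 t0) _ _) _.
  by rewrite (distrC (k x t)) [e in _ < e]splitr ltrD.
by apply: filterS cover => m cover x t x' xab tcd; apply: (cover (x, t)).
Qed.

End UniformContinuity.

Section WindingAngle.
Variable R : realType.
Implicit Types (c s : nat -> R) (N : nat).

Lemma cos_sin_atan_div (r v : R) : 0 < r -> r ^+ 2 + v ^+ 2 = 1 ->
  cos (atan (v / r)) = r /\ sin (atan (v / r)) = v.
Proof.
move=> r_gt0 unit_rv; have r_neq0 : r != 0 by rewrite gt_eqF.
have cos_r : cos (atan (v / r)) = r.
  rewrite cos_atan.
  have -> : 1 + (v / r) ^+ 2 = r^-1 ^+ 2.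
    transitivity ((r ^+ 2 + v ^+ 2) / r ^+ 2); first by field.
    by rewrite unit_rv div1r exprVn.
  by rewrite sqrtr_sqr ger0_norm ?invr_ge0 ?ltW // invrK.
split=> //; have := atanK (v / r); rewrite /tan cos_r.
by move: (atan _) => a tan_a; rewrite -(divfK r_neq0 v) -tan_a divfK.
Qed.

(* The angle from the unit vector (c j, s j) to (c j.+1, s j.+1), computed
   as atan of cross product over dot product: correct while the dot product
   is positive, i.e. while the step turns by less than a quarter turn. *)
Definition angle_step c s j : R :=
  atan ((s j.+1 * c j - c j.+1 * s j) / (c j.+1 * c j + s j.+1 * s j)).

Definition winding_angle c s N : R := \sum_(0 <= j < N) angle_step c s j.

Lemma eq_winding_angle c s c' s' N :
  (forall j, (j <= N)%N -> c j = c' j /\ s j = s' j) ->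
  winding_angle c s N = winding_angle c' s' N.
Proof.
move=> ccss; apply: eq_big_nat => j /andP[_ jN]; rewrite /angle_step.
by have [-> ->] := ccss j (ltnW jN); have [-> ->] := ccss j.+1 jN.
Qed.

Lemma cos_sin_winding_angle c s N :
  (forall j, (j <= N)%N -> c j ^+ 2 + s j ^+ 2 = 1) ->
  (forall j, (j < N)%N -> 0 < c j.+1 * c j + s j.+1 * s j) ->
  cos (winding_angle c s N) = c N * c 0%N + s N * s 0%N /\
  sin (winding_angle c s N) = s N * c 0%N - c N * s 0%N.
Proof.
elim: N => [|N IH] unit dot_gt0.
  by rewrite /winding_angle big_nil cos0 sin0 -!expr2 unit //; split=> //; ring.
have [IHc IHs] := IH (fun j jN => unit j (leqW jN))
  (fun j jN => dot_gt0 j (ltnW jN)).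
have unit_step : (c N.+1 * c N + s N.+1 * s N) ^+ 2 +
                 (s N.+1 * c N - c N.+1 * s N) ^+ 2 = 1.
  transitivity ((c N.+1 ^+ 2 + s N.+1 ^+ 2) * (c N ^+ 2 + s N ^+ 2)); first ring.
  by rewrite !unit // mulr1.
have [cos_step sin_step] := cos_sin_atan_div (dot_gt0 N (ltnSn N)) unit_step.
rewrite /winding_angle big_nat_recr //= cosD sinD.
rewrite -/(winding_angle c s N) /angle_step cos_step sin_step IHc IHs.
have unitN := unit N (leqnSn N); split.
- transitivity ((c N ^+ 2 + s N ^+ 2) * (c N.+1 * c 0%N + s N.+1 * s 0%N)).
    by ring.
  by rewrite unitN mul1r.
- transitivity ((c N ^+ 2 + s N ^+ 2) * (s N.+1 * c 0%N - c N.+1 * s 0%N)).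
    by ring.
  by rewrite unitN mul1r.
Qed.

Lemma winding_angle_rev c s N :
  winding_angle (fun j => c (N - j)%N) (fun j => s (N - j)%N) N =
  - winding_angle c s N.
Proof.
rewrite /winding_angle big_nat_rev -sumrN.
apply: eq_big_nat => j /andP[_ jN]; rewrite add0n /angle_step -atanN.
have -> : (N - (N - j.+1).+1 = j)%N by lia.
have -> : (N - (N - j.+1) = j.+1)%N by lia.
rewrite -[in RHS]mulNr; congr (atan (_ / _)); ring.
Qed.

Lemma unit_dot_gt0 (x1 x2 y1 y2 : R) :
  x1 ^+ 2 + x2 ^+ 2 = 1 -> y1 ^+ 2 + y2 ^+ 2 = 1 ->
  `|x1 - y1| < 1 / 2 -> `|x2 - y2| < 1 / 2 -> 0 < x1 * y1 + x2 * y2.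
Proof. by move=> ux uy; rewrite !ltr_norml => /andP[? ?] /andP[? ?]; nra. Qed.

End WindingAngle.

Section HalfTurnHomotopy.
Variable R : realType.
Implicit Types (N j : nat).

Definition grid N j : R := - (pi / 2) + j%:R * (pi / N.+1%:R).

Lemma grid_step_gt0 N : 0 < pi / N.+1%:R :> R.
Proof. by rewrite divr_gt0 ?pi_gt0 ?ltr0Sn. Qed.

Lemma gridS N j : grid N j.+1 - grid N j = pi / N.+1%:R.
Proof. by rewrite /grid -addn1 natrD; ring. Qed.

Lemma grid0 N : grid N 0 = - (pi / 2).
Proof. by rewrite /grid mul0r addr0. Qed.

Lemma grid_last N : grid N N.+1 = pi / 2.
Proof. by rewrite /grid [_%:R * _]mulrC divfK ?pnatr_eq0 //; lra. Qed.

Lemma grid_rev N j : (j <= N.+1)%N -> grid N (N.+1 - j) = - grid N j.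
Proof.
move=> jN; rewrite {1}/grid natrB // mulrBl [_ * (pi / _)]mulrC.
rewrite divfK ?pnatr_eq0 //.
(* lra does not abstract the nonlinear term j * (pi / N.+1) by itself. *)
by rewrite /grid; move: (_ * (pi / _)) => jh; lra.
Qed.

Lemma grid_itv N j : (j <= N.+1)%N -> (grid N j \in `[- (pi / 2), pi / 2])%R.
Proof.
move=> jN; have step_ge0 := ltW (grid_step_gt0 N).
rewrite in_itv /= {1}/grid lerDl mulr_ge0 //= -(grid_last N) /grid lerD2l.
by rewrite ler_wpM2r // ler_nat.
Qed.

Lemma no_antipodal_unit_homotopy (k1 k2 : R -> R -> R) :
  continuous (fun p : R * R => k1 p.1 p.2) ->
  continuous (fun p : R * R => k2 p.1 p.2) ->
  (forall x t, k1 x t ^+ 2 + k2 x t ^+ 2 = 1) ->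
  (forall t, k1 (- (pi / 2)) t = - k1 (pi / 2) t) ->
  (forall t, k2 (- (pi / 2)) t = - k2 (pi / 2) t) ->
  (forall x, k1 x pi = k1 (- x) 0) ->
  (forall x, k2 x pi = k2 (- x) 0) -> False.
Proof.
move=> ck1 ck2 unit odd1 odd2 refl1 refl2.
have pi_gt0 := pi_gt0 R; have half_gt0 : 0 < 1 / 2 :> R by lra.
have [N [uc1 uc2]] := filter_ex (filterI
  (uniform_continuity_rectangle (-(pi / 2)) (pi / 2) 0 pi pi_gt0 half_gt0 ck1)
  (uniform_continuity_rectangle (-(pi / 2)) (pi / 2) 0 pi pi_gt0 half_gt0 ck2)).
pose c t j := k1 (grid N j) t; pose s t j := k2 (grid N j) t.
have dot_gt0 t j : (t \in `[0, pi])%R -> (j < N.+1)%N ->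
    0 < c t j.+1 * c t j + s t j.+1 * s t j.
  move=> t0pi jN; have close_j : `|grid N j.+1 - grid N j| <= pi / N.+1%:R.
    by rewrite gridS gtr0_norm ?grid_step_gt0.
  by apply: unit_dot_gt0; rewrite ?unit //; [apply: uc1 | apply: uc2];
    rewrite ?grid_itv.
pose A t := winding_angle (c t) (s t) N.+1.
have cosA t : (t \in `[0, pi])%R -> cos (A t) = -1.
  move=> t0pi; have [-> _] := cos_sin_winding_angle (fun j _ => unit _ _)
    (fun j => dot_gt0 t j t0pi).
  by rewrite /c /s grid_last grid0 odd1 odd2 !mulrN -!expr2 -opprD unit.
have A_pi : A pi = - A 0.
  rewrite -winding_angle_rev; apply: eq_winding_angle => j jN.
  by rewrite /c /s refl1 refl2 grid_rev.
have cA t : (t \in `[0, pi])%R -> {for t, continuous A}.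
  move=> t0pi; apply: continuous_sum_nat => j jN.
  have cc i : continuous (c^~ i) by apply: continuous_slice.
  have cs i : continuous (s^~ i) by apply: continuous_slice.
  apply: (@continuous_comp _ _ _ (fun u => (s u j.+1 * c u j - c u j.+1 * s u j) /
    (c u j.+1 * c u j + s u j.+1 * s u j)) atan); last exact: continuous_atan.
  apply: cvgM; first by apply: cvgB; apply: cvgM; first [exact: cc | exact: cs].
  apply: cvgV; first by rewrite gt_eqF ?dot_gt0.
  by apply: cvgD; apply: cvgM; first [exact: cc | exact: cs].
have [t t0pi At0] : exists2 t, (t \in `[0, pi])%R & A t = 0.
  apply: IVT; first exact: ltW.
    by apply: continuous_in_subspaceT => t /set_mem; exact: cA.
  rewrite A_pi ge_min le_max oppr_le0 oppr_ge0.
  by case: (lerP 0 (A 0)) => [|/ltW ->]; rewrite ?orbT.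
by have := cosA t t0pi; rewrite At0 cos0; lra.
Qed.

End HalfTurnHomotopy.

Section ComplexHomotopy.
Variable R : realType.
Local Notation C := (Cplx R).
Local Open Scope complex_scope.

Lemma Im_continuous : continuous (fun z : C => complex.Im z).
Proof.
move=> z; apply/(@cvgrPdist_lt _ _ _ (nbhs z) (nbhs_filter z)) => e e_gt0.
apply/nbhs_ballP.
exists e%:C; first by rewrite /= ltcR.
move=> w; rewrite -ball_normE /= normc_def ltcR; apply: le_lt_trans.
case: z w => a b [c d] /=; rewrite -sqrtr_sqr ler_sqrt ?addr_ge0 ?sqr_ge0 //.
by rewrite lerDr sqr_ge0.
Qed.

Lemma Re_continuous : continuous (fun z : C => complex.Re z).
Proof.
move=> z; rewrite (_ : (fun _ => _) = (fun w => complex.Im (w * 'i%C))).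
  apply: (continuous_comp (f := fun w : C => w * 'i%C)).
    exact: mulrr_continuous.
  exact: Im_continuous.
by apply/funext => w; rewrite ImiRe.
Qed.

Lemma no_antipodal_nonvanishing_homotopy (G : R -> R -> C) :
  continuous (fun p : R * R => G p.1 p.2) -> (forall x t, G x t != 0) ->
  (forall t, G (- (pi / 2)) t = - G (pi / 2) t) ->
  (forall x, G x pi = G (- x) 0) -> False.
Proof.
move=> cG G_neq0 oddG reflG.
pose sqn x t := complex.Re (G x t) ^+ 2 + complex.Im (G x t) ^+ 2.
have sqn_gt0 x t : 0 < sqn x t.
  have := G_neq0 x t; rewrite /sqn; case: (G x t) => a b /= ab_neq0.
  rewrite lt0r addr_ge0 ?sqr_ge0 // andbT paddr_eq0 ?sqr_ge0 // !sqrf_eq0.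
  by apply: contra ab_neq0 => /andP[/eqP -> /eqP ->].
have cGc (f : C -> R) :
    continuous f -> continuous (fun p : R * R => f (G p.1 p.2)).
  by move=> cf p; apply: (continuous_comp (f := fun p : R * R => G p.1 p.2));
    [exact: cG | exact: cf].
have csqn : continuous (fun p : R * R => Num.sqrt (sqn p.1 p.2)).
  move=> p; apply: (continuous_comp (f := fun p : R * R => sqn p.1 p.2));
    last exact: sqrt_continuous.
  by apply: cvgD; rewrite !expr2; apply: cvgM; apply: cGc;
    first [exact: Re_continuous | exact: Im_continuous].
apply: (@no_antipodal_unit_homotopy R
  (fun x t => complex.Re (G x t) / Num.sqrt (sqn x t))
  (fun x t => complex.Im (G x t) / Num.sqrt (sqn x t))).
- move=> p; apply: cvgM; first exact: (cGc _ Re_continuous).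
  by apply: cvgV; [rewrite gt_eqF ?sqrtr_gt0 | exact: csqn].
- move=> p; apply: cvgM; first exact: (cGc _ Im_continuous).
  by apply: cvgV; [rewrite gt_eqF ?sqrtr_gt0 | exact: csqn].
- move=> x t; rewrite !expr_div_n -mulrDl sqr_sqrtr ?(ltW (sqn_gt0 x t)) //.
  by rewrite divff // gt_eqF // sqn_gt0.
- by move=> t; rewrite /sqn oddG; case: (G _ t) => a b /=; rewrite !sqrrN mulNr.
- by move=> t; rewrite /sqn oddG; case: (G _ t) => a b /=; rewrite !sqrrN mulNr.
- by move=> x; rewrite /sqn reflG.
- by move=> x; rewrite /sqn reflG.
Qed.

End ComplexHomotopy.

Section Antipode.
Variables (R : realType) (m : nat).

Lemma sphereN (v : 'rV[R]_m.+1) : sphere v -> sphere (- v).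
Proof.
rewrite /sphere /= => <-.
by apply: eq_bigr => i _; rewrite mxE sqrrN.
Qed.

Definition sph_antipode (x : Sph R m) : Sph R m :=
  exist _ (- set_val x) (mem_set (sphereN (set_valP x))).

Lemma sph_antipodeK : involutive sph_antipode.
Proof. by move=> x; apply: val_inj; rewrite /= opprK. Qed.

Lemma sph_antipode_neq (x : Sph R m) : sph_antipode x != x.
Proof.
apply/negP => /eqP/(congr1 set_val) /= xN.
have /eqP : (2 : R) *: set_val x = 0 by rewrite scaler_nat mulr2n -{2}xN subrr.
rewrite scaler_eq0 pnatr_eq0 /= => /eqP x0.
have := set_valP x; rewrite -set_valE x0 /sphere /=.
by rewrite big1 => [/esym/eqP|i _]; rewrite ?oner_eq0 // mxE expr0n.
Qed.

Lemma proj_RP_antipode (x : Sph R m) : proj_RP (sph_antipode x) = proj_RP x.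
Proof. by apply/eqquotP; rewrite /= /antipodal eqxx orbT. Qed.

Lemma continuous_sph_antipode : continuous sph_antipode.
Proof.
apply: continuous_comp_initial => x /=.
exact: continuousN (@initial_continuous _ _ _ x).
Qed.

End Antipode.

Section SphericalCoordinates.
Variables (R : realType) (n : nat).

Definition coord_rV (k : nat) : 'rV[R]_n.+3 := \row_i (i == k :> nat)%:R.

Definition spherical_rV (x t : R) : 'rV[R]_n.+3 :=
  (sin x * cos t) *: coord_rV 0 + (sin x * sin t) *: coord_rV 1 +
  cos x *: coord_rV 2.

Lemma spherical_rV_sphere (x t : R) : sphere (spherical_rV x t).
Proof.
rewrite /sphere /= 3!big_ord_recl big1 => [|i _]; last first.
  by rewrite !mxE /= !mulr0 !addr0 expr0n.
rewrite !mxE /= !mulr0 !mulr1 !addr0 !add0r !exprMn addrA -mulrDr cos2Dsin2.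
by rewrite mulr1 addrC cos2Dsin2.
Qed.

Definition spherical (x t : R) : Sph R n.+2 :=
  exist _ (spherical_rV x t) (mem_set (spherical_rV_sphere x t)).

Lemma continuous_spherical : continuous (fun p : R * R => spherical p.1 p.2).
Proof.
apply: continuous_comp_initial.
have cfst (f : R -> R) : continuous f -> continuous (fun q : R * R => f q.1).
  by move=> cf q; apply: (continuous_comp (f := fst)); [exact: cvg_fst|exact: cf].
have csnd (f : R -> R) : continuous f -> continuous (fun q : R * R => f q.2).
  by move=> cf q; apply: (continuous_comp (f := snd)); [exact: cvg_snd|exact: cf].
have cs1 := cfst _ (@continuous_sin R); have cc1 := cfst _ (@continuous_cos R).
have cs2 := csnd _ (@continuous_sin R); have cc2 := csnd _ (@continuous_cos R).
have cZ (f : R * R -> R) (v : 'rV[R]_n.+3) :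
    continuous f -> continuous (fun q => f q *: v).
  by move=> cf q; apply: cvgZr_tmp; exact: cf.
move=> p; apply: cvgD; first apply: cvgD.
- by apply: cZ => q; exact: cvgM (cs1 q) (cc2 q).
- by apply: cZ => q; exact: cvgM (cs1 q) (cs2 q).
- exact: cZ.
Qed.

Lemma spherical_pihalfN (t : R) :
  spherical (- (pi / 2)) t = sph_antipode (spherical (pi / 2) t).
Proof.
apply: val_inj; rewrite /= set_valE /= /spherical_rV.
rewrite sinN cosN sin_pihalf cos_pihalf.
by rewrite !scale0r !addr0 !mulN1r !mul1r !scaleNr opprD.
Qed.

Lemma spherical_pi (x : R) : spherical x pi = spherical (- x) 0.
Proof.
apply: val_inj; rewrite /= /spherical_rV sinN cosN sinpi cospi sin0 cos0.
by rewrite mulrN1 mulNr mulr1 !mulr0.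
Qed.

End SphericalCoordinates.

Lemma no_odd_nonvanishing_map_sphere (R : realType) (n : nat)
    (g : Sph R n.+2 -> Cplx R) :
  continuous g -> (forall x, g (sph_antipode x) = - g x) ->
  (forall x, g x != 0) -> False.
Proof.
move=> cg g_odd g_neq0.
apply: (@no_antipodal_nonvanishing_homotopy R (fun x t => g (spherical n x t))).
- move=> p; apply: (continuous_comp (f := fun p : R * R => spherical n p.1 p.2)).
    exact: continuous_spherical.
  exact: cg.
- by move=> x t; exact: g_neq0.
- by move=> t; rewrite spherical_pihalfN g_odd.
- by move=> x; rewrite spherical_pi.
Qed.

Lemma ZF_eq (R : realType) (X : topologicalType) (F : X * Cplx R -> Cplx R)
    (u v : ZF F) :
  proj1Z u = proj1Z v -> (set_val u).2 = (set_val v).2 -> u = v.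
Proof.
move=> base_uv fibre_uv; apply: val_inj.
by rewrite [LHS]surjective_pairing [RHS]surjective_pairing; congr pair.
Qed.

Unset Implicit Arguments.

Theorem mainTheorem15 (R : realType) (n : nat) (hn : (2 <= n)%N) :
  ~ exists F : ((RP R n * S1 R)%type * Cplx R)%type -> Cplx R,
      weierstrass_entire_family F /\
      equivalent_coverings (@prod_cover R n) (@proj1Z R _ F).
Proof.
case: n hn => [|[|n]] // _ [F [_ [h [h' [ch _ hK _ h_proj]]]]].
pose f (x : Sph R n.+2) := (set_val (h (x, 0))).2.
have cf : continuous f.
  move=> x; apply: (continuous_comp (f := fun x => set_val (h (x, 0))));
    last exact: cvg_snd.
  apply: (continuous_comp (f := fun x => h (x, 0)));
    last exact: initial_continuous.
  apply: (@continuous_comp _ _ _ (fun y => (y, 0 : R)) h x _ (ch _)).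
  by apply: (@cvg_pair _ _ _ (nbhs x) (nbhs x) (nbhs (0 : R)));
    [exact: cvg_id | exact: cvg_cst].
apply: (@no_odd_nonvanishing_map_sphere R n (fun x => f x - f (sph_antipode x))).
- move=> x; apply: cvgB (cf x) _.
  exact: (continuous_comp (@continuous_sph_antipode R _ x) (cf _)).
- by move=> x; rewrite sph_antipodeK opprB.
- move=> x; rewrite subr_eq0; apply/eqP => fxN.
  have : h (x, 0) = h (sph_antipode x, 0).
    by apply: ZF_eq; rewrite // !h_proj /prod_cover /= proj_RP_antipode.
  move/(congr1 h'); rewrite !hK => -[/esym/eqP].
  by apply/negP; exact: sph_antipode_neq.
Qed.
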